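(* Let $0<c<\Gamma_0$ and $t>0$, and let $\mathcal D=\{(\tau,p):0<\tau<t,\ c<p<\Gamma_0\}$. Let $A$ be the cooperation area and regions IV, V, VI as defined in the context, and let $w_0$, $w_1$, $w_2$ be the associated thresholds defined there. If $(\tau^\star,p^\star)\in\mathcal D$ maximizes $A$ over $\mathcal D$, then one of the following holds: - $(\tau^\star,p^\star)$ lies in the closure of region IV; - $(\tau^\star,p^\star)$ lies in region V and $A_c(\tau^\star,p^\star;w_1,1)-A_s(\tau^\star,p^\star;w_0,w_1)=1-2w_1+w_0$; - $(\tau^\star,p^\star)$ lies in region VI and $A_s(\tau^\star,p^\star;w_2,1)-A_c(\tau^\star,p^\star;w_0,w_2)=1-2w_2+w_0$. Here $w_0,w_1,w_2$ are evaluated at $(\tau^\star,p^\star)$.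
   Context: The client utility is linear: $\Gamma(d)=\Gamma_0(1-d)$. For $(\tau,p)\in\mathcal D$ write $s=\tau/t$ and, for $w\in(0,1]$, set $K(w)=1-(1-w)s$. Define the SP and client outage thresholds $$d_s(w;\tau,p)=1-\frac{cK(w)}{wp},\qquad d_c(w;\tau,p)=1-\frac{p}{\Gamma_0K(w)}.$$ The cooperation area is $$A(\tau,p)=\int_0^1\max\{\min(d_s(w;\tau,p),d_c(w;\tau,p)),0\}\,dw.$$ For $0\le x\le y\le 1$, let $$A_s(\tau,p;x,y)=\int_x^y d_s(w;\tau,p)\,dw,\qquad A_c(\tau,p;x,y)=\int_x^y d_c(w;\tau,p)\,dw.$$ Define the thresholds $$w_0=\max\left\{\frac{c(t-\tau)}{pt-c\tau},\ \frac{pt-\Gamma_0(t-\tau)}{\Gamma_0\tau}\right\},$$ $$w_{1}=\left(\frac{p-\sqrt{p^2-4c\Gamma_0 s(1-s)}}{2s\sqrt{c\Gamma_0}}\right)^2,\qquad w_{2}=\left(\frac{p+\sqrt{p^2-4c\Gamma_0 s(1-s)}}{2s\sqrt{c\Gamma_0}}\right)^2.$$ The regions (subsets of $\mathcal D$) are: - region IV: $p^2\ge 4c\Gamma_0 s(1-s)$, $p<\Gamma_0(1-s)+cs$, $p<\sqrt{c\Gamma_0}$, and $\tfrac12<s<\tfrac{\Gamma_0}{\Gamma_0+c}$; - region V: $p^2\ge4c\Gamma_0 s(1-s)$, $p<\Gamma_0(1-s)+cs$, and $p>\sqrt{c\Gamma_0}$; - region VI: $p^2\ge 4c\Gamma_0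 s(1-s)$, $p>\Gamma_0(1-s)+cs$, and $p<\sqrt{c\Gamma_0}$. *)

From Stdlib Require Import Reals.
From Coquelicot Require Import Coquelicot.
Open Scope R_scope.

Definition sr (t tau : R) : R := tau / t.
Definition Kw (t tau w : R) : R := 1 - (1 - w) * sr t tau.

Definition d_s (c t tau p w : R) : R := 1 - c * Kw t tau w / (w * p).
Definition d_c (G0 t tau p w : R) : R := 1 - p / (G0 * Kw t tau w).

Definition coop_area (c G0 t tau p : R) : R :=
  RInt (fun w => Rmax (Rmin (d_s c t tau p w) (d_c G0 t tau p w)) 0) 0 1.

Definition A_s (c t tau p x y : R) : R := RInt (fun w => d_s c t tau p w) x y.
Definition A_c (G0 t tau p x y : R) : R := RInt (fun w => d_c G0 t tau p w) x y.

Definition inD (c G0 t tau p : R) : Prop := 0 < tau < t /\ c < p < G0.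

Definition w0 (c G0 t tau p : R) : R :=
  Rmax (c * (t - tau) / (p * t - c * tau)) ((p * t - G0 * (t - tau)) / (G0 * tau)).
Definition w1 (c G0 t tau p : R) : R :=
  let s := sr t tau in
  ((p - sqrt (p ^ 2 - 4 * c * G0 * s * (1 - s))) / (2 * s * sqrt (c * G0))) ^ 2.
Definition w2 (c G0 t tau p : R) : R :=
  let s := sr t tau in
  ((p + sqrt (p ^ 2 - 4 * c * G0 * s * (1 - s))) / (2 * s * sqrt (c * G0))) ^ 2.

Definition region_IV (c G0 t tau p : R) : Prop :=
  let s := sr t tau in
  inD c G0 t tau p /\ p ^ 2 >= 4 * c * G0 * s * (1 - s) /\
  p < G0 * (1 - s) + c * s /\ p < sqrt (c * G0) /\ 1 / 2 < s < G0 / (G0 + c).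
Definition region_V (c G0 t tau p : R) : Prop :=
  let s := sr t tau in
  inD c G0 t tau p /\ p ^ 2 >= 4 * c * G0 * s * (1 - s) /\
  p < G0 * (1 - s) + c * s /\ p > sqrt (c * G0).
Definition region_VI (c G0 t tau p : R) : Prop :=
  let s := sr t tau in
  inD c G0 t tau p /\ p ^ 2 >= 4 * c * G0 * s * (1 - s) /\
  p > G0 * (1 - s) + c * s /\ p < sqrt (c * G0).

Definition in_closure (P : R -> R -> Prop) (tau p : R) : Prop :=
  forall eps, 0 < eps ->
    exists tau' p', P tau' p' /\ Rabs (tau - tau') < eps /\ Rabs (p - p') < eps.

From Stdlib Require Import Reals Lra Psatz.
From Coquelicot Require Import Coquelicot.
Open Scope R_scope.

(* In the variable s = tau/t the integrand of A is min(d_s, d_c)^+, and d_c - d_s has the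
   sign of the convex quadratic cG K(w)^2 - p^2 w, whose roots are w_1 <= w_2.  Where d_s <= d_c
   on the whole support of d_s^+, the area is the integral of d_s^+, which strictly increases
   with s and p; symmetrically the integral of d_c^+ strictly increases as s and p decrease.
   Moving towards such a pure regime excludes every (s, p) except regions V and VI, the closure
   of region IV (whose boundary is reached by explicit curves) and the line p = G(1-s) + cs
   where V and VI meet a pure regime.  In region V the area is the integral of d_s over
   [w_s, w_1] plus that of d_c over [w_1, 1] (in VI: d_c over [w_c, w_2], d_s over [w_2, 1]);
   as the integrand is continuous at w_1 (w_2) and vanishes at w_s (w_c), dA/dp only sees the
   explicit dependence on p, and the identity of the theorem is exactly p dA/dp = 0.  On the
   line above dA/dp is nonzero, so it carries no maximiser either. *)

Ltac positivity :=
  repeat first [ apply Rmult_lt_0_compat | apply Rdiv_lt_0_compat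
               | apply Rinv_0_lt_compat | apply pow_lt ]; try lra.

Lemma continuous_Rmax_comp (f g : R -> R) x :
  continuous f x -> continuous g x -> continuous (fun y => Rmax (f y) (g y)) x.
Proof.
  intros Hf Hg.
  apply continuous_ext with (f := fun y => (f y + g y + Rabs (f y - g y)) * / 2).
  { intros y. unfold Rmax.
    destruct (Rle_dec (f y) (g y)); [rewrite Rabs_left1 | rewrite Rabs_right]; lra. }
  apply (continuous_mult (fun y => f y + g y + Rabs (f y - g y)) (fun _ => / 2));
    [|apply continuous_const].
  apply (continuous_plus (fun y => f y + g y) (fun y => Rabs (f y - g y))).
  - apply (continuous_plus f g); auto.
  - apply continuous_Rabs_comp, (continuous_minus f g); auto.
Qed.

Lemma continuous_Rmin_comp (f g : R -> R) x :
  continuous f x -> continuous g x -> continuous (fun y => Rmin (f y) (g y)) x.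
Proof.
  intros Hf Hg.
  apply continuous_ext with (f := fun y => f y + g y - Rmax (f y) (g y)).
  { intros y. unfold Rmin, Rmax. destruct (Rle_dec (f y) (g y)); lra. }
  apply (continuous_minus (fun y => f y + g y) (fun y => Rmax (f y) (g y))).
  - apply (continuous_plus f g); auto.
  - apply continuous_Rmax_comp; auto.
Qed.

(* Replacing [w] by [Rmax w m] does not change the positive part and makes it continuous. *)
Lemma ex_RInt_pos_part (h : R -> R) m : 0 < m < 1 ->
  (forall z, m <= z <= 1 -> continuous h z) -> (forall z, 0 < z <= m -> h z <= 0) ->
  ex_RInt (fun w => Rmax (h w) 0) 0 1.
Proof.
  intros Hm Hcont Hneg.
  apply ex_RInt_ext with (f := fun w => Rmax (h (Rmax w m)) 0).
  { intros x Hx. rewrite Rmin_left, Rmax_right in Hx by lra.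
    destruct (Rle_dec x m).
    - rewrite (Rmax_right x m), (Rmax_right (h m) 0), (Rmax_right (h x) 0) by (try apply Hneg; lra).
      reflexivity.
    - rewrite (Rmax_left x m) by lra. reflexivity. }
  apply (ex_RInt_continuous (V := R_CompleteNormedModule)). intros z Hz.
  rewrite Rmin_left, Rmax_right in Hz by lra.
  apply (continuous_comp (fun w => Rmax w m) (fun y => Rmax (h y) 0)).
  - apply continuous_Rmax_comp; [apply continuous_id | apply continuous_const].
  - apply continuous_Rmax_comp; [|apply continuous_const].
    apply Hcont. split; [apply Rmax_r | apply Rmax_lub; lra].
Qed.

Lemma RInt_piecewise3 (f g h : R -> R) a b :
  0 <= a <= b -> b <= 1 -> ex_RInt f 0 1 ->
  (forall x, 0 < x < a -> f x = 0) ->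
  (forall x, a < x < b -> f x = g x) ->
  (forall x, b < x < 1 -> f x = h x) ->
  RInt f 0 1 = RInt g a b + RInt h b 1.
Proof.
  intros Hab Hb Hf H0 Hg Hh.
  assert (Ea1 : ex_RInt f a 1)
    by (apply (ex_RInt_Chasles_2 (V := R_CompleteNormedModule)) with 0; auto; lra).
  rewrite <- (RInt_Chasles f 0 a 1), <- (RInt_Chasles f a b 1).
  - rewrite (RInt_ext f (fun _ => 0) 0 a), (RInt_ext f g a b), (RInt_ext f h b 1), RInt_const;
      [|intros x Hx; rewrite Rmin_left, Rmax_right in Hx by lra; auto; lra ..].
    unfold plus, scal; simpl; unfold mult; simpl. ring.
  - apply (ex_RInt_Chasles_1 (V := R_CompleteNormedModule)) with 1; auto; lra.
  - apply (ex_RInt_Chasles_2 (V := R_CompleteNormedModule)) with a; auto; lra.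
  - apply (ex_RInt_Chasles_1 (V := R_CompleteNormedModule)) with 1; auto; lra.
  - exact Ea1.
Qed.

Lemma RInt_lt_split (f g : R -> R) m : 0 <= m < 1 -> ex_RInt f 0 1 -> ex_RInt g 0 1 ->
  (forall x, 0 < x < m -> f x <= g x) ->
  (forall x, m <= x <= 1 -> continuous f x) -> (forall x, m <= x <= 1 -> continuous g x) ->
  (forall x, m < x < 1 -> f x < g x) ->
  RInt f 0 1 < RInt g 0 1.
Proof.
  intros Hm Ef Eg Hle Cf Cg Hlt.
  assert (E0 : forall h, ex_RInt h 0 1 -> ex_RInt h 0 m)
    by (intros; apply (ex_RInt_Chasles_1 (V := R_CompleteNormedModule)) with 1; auto; lra).
  assert (E1 : forall h, ex_RInt h 0 1 -> ex_RInt h m 1)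
    by (intros; apply (ex_RInt_Chasles_2 (V := R_CompleteNormedModule)) with 0; auto; lra).
  rewrite <- (RInt_Chasles f 0 m 1), <- (RInt_Chasles g 0 m 1) by auto.
  unfold plus; simpl.
  assert (RInt f 0 m <= RInt g 0 m) by (apply RInt_le; auto; lra).
  assert (RInt f m 1 < RInt g m 1) by (apply RInt_lt; auto; lra).
  lra.
Qed.

Lemma is_derive_pos_right (f : R -> R) x l : is_derive f x l -> 0 < l ->
  forall h, 0 < h -> exists y, x < y < x + h /\ f x < f y.
Proof.
  intros D Hl h Hh. apply is_derive_Reals in D.
  destruct (D (l / 2) ltac:(lra)) as [del Hd].
  set (e := Rmin h del / 2).
  assert (He : 0 < e /\ e < h /\ e < del).
  { pose proof (Rmin_l h del). pose proof (Rmin_r h del). pose proof (cond_pos del).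
    assert (0 < Rmin h del) by (apply Rmin_glb_lt; lra). unfold e; lra. }
  exists (x + e). split; [lra|].
  specialize (Hd e ltac:(lra) ltac:(rewrite Rabs_right; lra)).
  apply Rabs_def2 in Hd.
  assert (E : f (x + e) - f x = (f (x + e) - f x) / e * e) by (field; lra).
  nra.
Qed.

Lemma is_derive_neg_left (f : R -> R) x l : is_derive f x l -> l < 0 ->
  forall h, 0 < h -> exists y, x - h < y < x /\ f x < f y.
Proof.
  intros D Hl h Hh.
  assert (D' : is_derive (fun y => f (- y)) (- x) (- l)).
  { replace (- l) with (-1 * l) by ring. apply (is_derive_comp f Ropp).
    - rewrite Ropp_involutive. exact D.
    - auto_derive; [exact I | ring]. }
  destruct (is_derive_pos_right _ _ _ D' ltac:(lra) h Hh) as [y [Hy Hf]].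
  exists (- y). rewrite Ropp_involutive in Hf. split; lra.
Qed.

Lemma is_derive_local_max (f : R -> R) x l h : is_derive f x l -> 0 < h ->
  (forall y, x - h < y < x + h -> f y <= f x) -> l = 0.
Proof.
  intros D Hh Hm. apply is_derive_Reals in D.
  rewrite <- (derive_pt_eq_0 f x l (exist _ l D) D).
  apply deriv_maximum with (x - h) (x + h); try lra.
  intros y H1 H2. apply Hm. lra.
Qed.

Lemma exists_pos_le a b d : 0 < a -> 0 < b -> 0 < d ->
  exists h, 0 < h /\ h <= a /\ h <= b /\ h <= d.
Proof.
  intros. exists (Rmin a (Rmin b d)).
  pose proof (Rmin_l b d). pose proof (Rmin_r b d). pose proof (Rmin_l a (Rmin b d)).
  pose proof (Rmin_r a (Rmin b d)). repeat split; try lra.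
  repeat apply Rmin_glb_lt; lra.
Qed.

Lemma exists_between_sq p Q M : 0 < p -> p ^ 2 < Q -> Q < M ^ 2 -> 0 < M ->
  exists p', p < p' < M /\ p' ^ 2 < Q.
Proof.
  intros Hp HpQ HQM HM.
  pose proof (sqrt_sqrt Q ltac:(nra)). pose proof (sqrt_pos Q).
  assert (p < sqrt Q < M) by (split; nra).
  exists ((p + sqrt Q) / 2). split; [lra | nra].
Qed.

Lemma sqrt_cG c G : 0 < c -> c < G ->
  sqrt (c * G) * sqrt (c * G) = c * G /\ c < sqrt (c * G) < G.
Proof.
  intros. assert (E : sqrt (c * G) * sqrt (c * G) = c * G) by (apply sqrt_sqrt; nra).
  pose proof (sqrt_pos (c * G)). repeat split; nra.
Qed.

Lemma at_right_0_lt b : 0 < b -> at_right 0 (fun e => e < b).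
Proof.
  intros Hb. exists (mkposreal b Hb). intros y Hy Hy0.
  cbv [ball] in Hy; simpl in Hy. unfold AbsRing_ball, abs, minus, plus, opp in Hy; simpl in Hy.
  apply Rabs_def2 in Hy. lra.
Qed.

(** * The outage thresholds in the variable s = tau / t *)

(* [ds], [dc] are d_s, d_c as functions of s = tau/t; [ws], [wc] are their zeros, so that
   w_0 = Rmax ws wc, and both equal c/G on the line p = plin c G s. *)
Definition K (s w : R) : R := 1 - (1 - w) * s.
Definition ds (c s p w : R) : R := 1 - c * K s w / (w * p).
Definition dc (G s p w : R) : R := 1 - p / (G * K s w).
Definition coop (c G s p w : R) : R := Rmax (Rmin (ds c s p w) (dc G s p w)) 0.
Definition area (c G s p : R) : R := RInt (coop c G s p) 0 1.

Definition ws (c s p : R) : R := c * (1 - s) / (p - c * s).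
Definition wc (G s p : R) : R := (p - G * (1 - s)) / (G * s).
Definition plin (c G s : R) : R := G * (1 - s) + c * s.

Lemma K_pos s w : 0 < s < 1 -> 0 <= w -> 0 < K s w.
Proof. intros. unfold K. nra. Qed.

Lemma K_1 s : K s 1 = 1.
Proof. unfold K; ring. Qed.

Lemma ws_pos c s p : 0 < c -> 0 < s < 1 -> c < p -> 0 < ws c s p.
Proof. intros. unfold ws. apply Rdiv_lt_0_compat; nra. Qed.

Lemma ws_lt_1 c s p : 0 < c -> 0 < s < 1 -> c < p -> ws c s p < 1.
Proof. intros. unfold ws. apply Rlt_div_l; nra. Qed.

Lemma wc_lt_1 G s p : 0 < G -> 0 < s < 1 -> p < G -> wc G s p < 1.
Proof. intros. unfold wc. apply Rlt_div_l; nra. Qed.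

Lemma ds_ws c s p : 0 < c -> 0 < s < 1 -> c < p -> ds c s p (ws c s p) = 0.
Proof. intros. unfold ds, K, ws. field. repeat split; nra. Qed.

Lemma dc_wc G s p : 0 < G -> 0 < s < 1 -> 0 < p -> dc G s p (wc G s p) = 0.
Proof. intros. unfold dc, K, wc. field. split; lra. Qed.

Lemma ds_factor c s p w : 0 < w -> 0 < p -> c * s < p ->
  ds c s p w = (p - c * s) * (w - ws c s p) / (w * p).
Proof. intros. unfold ds, ws, K. field. lra. Qed.

Lemma dc_factor G s p w : 0 < G -> 0 < s -> 0 < K s w ->
  dc G s p w = s * (w - wc G s p) / K s w.
Proof. intros. unfold dc, wc. unfold K in *. field. lra. Qed.

Lemma ds_neg c s p w : 0 < c -> 0 < s < 1 -> c < p -> 0 < w < ws c s p -> ds c s p w < 0.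
Proof.
  intros. rewrite ds_factor by nra. apply Rdiv_neg_pos; [|nra].
  apply Rmult_pos_neg; nra.
Qed.

Lemma ds_pos_iff c s p w : 0 < c -> 0 < s < 1 -> c < p -> 0 < w ->
  0 < ds c s p w <-> ws c s p < w.
Proof.
  intros Hc Hs Hp Hw. split; intros H.
  - destruct (Rlt_le_dec (ws c s p) w) as [|[Hlt | Heq]]; auto.
    + pose proof (ds_neg c s p w Hc Hs Hp (conj Hw Hlt)); lra.
    + subst w. rewrite ds_ws in H; lra.
  - assert (c * s < p) by nra. rewrite ds_factor by lra.
    apply Rdiv_lt_0_compat; [apply Rmult_lt_0_compat|]; nra.
Qed.

Lemma dc_neg G s p w : 0 < G -> 0 < s < 1 -> 0 <= w < wc G s p -> dc G s p w < 0.
Proof.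
  intros. assert (0 < K s w) by (apply K_pos; lra).
  rewrite dc_factor by lra. apply Rdiv_neg_pos; nra.
Qed.

Lemma dc_pos_iff G s p w : 0 < G -> 0 < s < 1 -> 0 < p -> 0 <= w ->
  0 < dc G s p w <-> wc G s p < w.
Proof.
  intros HG Hs Hp Hw. assert (HK : 0 < K s w) by (apply K_pos; lra). split; intros H.
  - destruct (Rlt_le_dec (wc G s p) w) as [|[Hlt | Heq]]; auto.
    + pose proof (dc_neg G s p w HG Hs (conj Hw Hlt)); lra.
    + subst w. rewrite dc_wc in H; lra.
  - rewrite dc_factor by lra. apply Rdiv_lt_0_compat; nra.
Qed.

Lemma continuous_ds c s p z : 0 < z -> 0 < p -> continuous (ds c s p) z.
Proof.
  intros. apply (ex_derive_continuous (K := R_AbsRing) (V := R_NormedModule)).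
  unfold ds, K. auto_derive. apply Rgt_not_eq, Rmult_lt_0_compat; lra.
Qed.

Lemma continuous_dc G s p z : 0 < G -> 0 < K s z -> continuous (dc G s p) z.
Proof.
  intros. apply (ex_derive_continuous (K := R_AbsRing) (V := R_NormedModule)).
  unfold dc. unfold K in *. auto_derive. apply Rgt_not_eq, Rmult_lt_0_compat; lra.
Qed.

Lemma ex_RInt_ds_pos c s p : 0 < c -> 0 < s < 1 -> c < p ->
  ex_RInt (fun w => Rmax (ds c s p w) 0) 0 1.
Proof.
  intros Hc Hs Hp. pose proof (ws_pos c s p Hc Hs Hp). pose proof (ws_lt_1 c s p Hc Hs Hp).
  apply ex_RInt_pos_part with (m := ws c s p / 2); [lra | |].
  - intros z Hz. apply continuous_ds; lra.
  - intros z Hz. left. apply ds_neg; lra.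
Qed.

Lemma ex_RInt_dc_pos G s p : 0 < G -> 0 < s < 1 ->
  ex_RInt (fun w => Rmax (dc G s p w) 0) 0 1.
Proof.
  intros HG Hs. apply (ex_RInt_continuous (V := R_CompleteNormedModule)). intros z Hz.
  rewrite Rmin_left, Rmax_right in Hz by lra.
  apply continuous_Rmax_comp; [|apply continuous_const].
  apply continuous_dc; [lra | apply K_pos; lra].
Qed.

Lemma ex_RInt_coop c G s p : 0 < c -> 0 < G -> 0 < s < 1 -> c < p ->
  ex_RInt (coop c G s p) 0 1.
Proof.
  intros Hc HG Hs Hp. pose proof (ws_pos c s p Hc Hs Hp). pose proof (ws_lt_1 c s p Hc Hs Hp).
  apply ex_RInt_pos_part with (m := ws c s p / 2); [lra | |].
  - intros z Hz. apply continuous_Rmin_comp.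
    + apply continuous_ds; lra.
    + apply continuous_dc; [lra | apply K_pos; lra].
  - intros z Hz. apply Rlt_le, Rle_lt_trans with (ds c s p z); [apply Rmin_l | apply ds_neg; lra].
Qed.

Definition Ls (s w : R) : R := (1 - s) * ln w + s * w.
Definition ds_prim (c s p w : R) : R := w - c / p * Ls s w.
Definition dc_prim (G s p w : R) : R := w - p / (G * s) * ln (K s w).

Lemma RInt_ds c s p x y : 0 < x -> 0 < y -> 0 < p ->
  RInt (ds c s p) x y = ds_prim c s p y - ds_prim c s p x.
Proof.
  intros Hx Hy Hp. assert (0 < Rmin x y) by (apply Rmin_glb_lt; auto).
  apply is_RInt_unique, (is_RInt_derive (V := R_CompleteNormedModule)).
  - intros z Hz. unfold ds_prim, Ls, ds, K. auto_derive.
    + repeat split; lra.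
    + field. lra.
  - intros z Hz. apply continuous_ds; lra.
Qed.

Lemma RInt_dc G s p x y : 0 < G -> 0 < s < 1 -> 0 <= x -> 0 <= y ->
  RInt (dc G s p) x y = dc_prim G s p y - dc_prim G s p x.
Proof.
  intros HG Hs Hx Hy. assert (0 <= Rmin x y) by (apply Rmin_glb; auto).
  apply is_RInt_unique, (is_RInt_derive (V := R_CompleteNormedModule)).
  - intros z Hz. assert (HK : 0 < K s z) by (apply K_pos; lra).
    unfold dc_prim, dc. unfold K in *. auto_derive.
    + repeat split; lra.
    + field. lra.
  - intros z Hz. apply continuous_dc; [lra | apply K_pos; lra].
Qed.

Lemma dc_prim_1 G s p : dc_prim G s p 1 = 1.
Proof. unfold dc_prim. rewrite K_1, ln_1. ring. Qed.

Lemma ds_prim_1 c s p : p <> 0 -> ds_prim c s p 1 = 1 - c * s / p.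
Proof. intros. unfold ds_prim, Ls. rewrite ln_1. field. auto. Qed.

Lemma coop_eq_0 c G s p w : ds c s p w <= 0 \/ dc G s p w <= 0 -> coop c G s p w = 0.
Proof.
  intros H. unfold coop. apply Rmax_right.
  destruct H; [apply Rle_trans with (2 := H), Rmin_l | apply Rle_trans with (2 := H), Rmin_r].
Qed.

Lemma coop_eq_ds c G s p w : 0 <= ds c s p w <= dc G s p w -> coop c G s p w = ds c s p w.
Proof. intros. unfold coop. rewrite Rmin_left, Rmax_left; lra. Qed.

Lemma coop_eq_dc c G s p w : 0 <= dc G s p w <= ds c s p w -> coop c G s p w = dc G s p w.
Proof. intros. unfold coop. rewrite Rmin_right, Rmax_left; lra. Qed.

Lemma coop_area_scaled c G t tau p : coop_area c G t tau p = area c G (tau / t) p.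
Proof. reflexivity. Qed.

Lemma A_s_scaled c t tau p x y : A_s c t tau p x y = RInt (ds c (tau / t) p) x y.
Proof. reflexivity. Qed.

Lemma A_c_scaled G t tau p x y : A_c G t tau p x y = RInt (dc G (tau / t) p) x y.
Proof. reflexivity. Qed.

Lemma w0_scaled c G t tau p : 0 < c -> 0 < G -> 0 < t -> 0 < tau < t -> c < p ->
  w0 c G t tau p = Rmax (ws c (tau / t) p) (wc G (tau / t) p).
Proof.
  intros. unfold w0, ws, wc. assert (p * t - c * tau > 0) by nra.
  f_equal; field; repeat split; lra.
Qed.

(** * Where the two thresholds cross *)

(* [dc - ds] has the sign of [crossing] (see [dc_sub_ds]); [root1], [root2] are w_1, w_2. *)
Definition crossing (c G s p w : R) : R := c * G * K s w ^ 2 - p ^ 2 * w.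
Definition disc (c G s p : R) : R := p ^ 2 - 4 * c * G * s * (1 - s).
Definition root1 (c G s p : R) : R :=
  (p ^ 2 - 2 * c * G * s * (1 - s) - p * sqrt (disc c G s p)) / (2 * c * G * s ^ 2).
Definition root2 (c G s p : R) : R :=
  (p ^ 2 - 2 * c * G * s * (1 - s) + p * sqrt (disc c G s p)) / (2 * c * G * s ^ 2).

Lemma dc_sub_ds c G s p w : 0 < G -> 0 < p -> 0 < w -> 0 < K s w ->
  dc G s p w - ds c s p w = crossing c G s p w / (G * K s w * w * p).
Proof. intros. unfold dc, ds, crossing. field. repeat split; lra. Qed.

Lemma ds_le_dc c G s p w : 0 < G -> 0 < p -> 0 < w -> 0 < K s w ->
  0 <= crossing c G s p w -> ds c s p w <= dc G s p w.
Proof.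
  intros. cut (0 <= dc G s p w - ds c s p w); [lra|].
  rewrite dc_sub_ds by auto. apply Rdiv_le_0_compat; auto.
  repeat apply Rmult_lt_0_compat; auto.
Qed.

Lemma dc_le_ds c G s p w : 0 < G -> 0 < p -> 0 < w -> 0 < K s w ->
  crossing c G s p w <= 0 -> dc G s p w <= ds c s p w.
Proof.
  intros. cut (dc G s p w - ds c s p w <= 0); [lra|].
  rewrite dc_sub_ds by auto. apply Rmult_le_0_r; auto.
  left. apply Rinv_0_lt_compat. repeat apply Rmult_lt_0_compat; auto.
Qed.

Lemma ds_eq_dc_of_crossing c G s p w : 0 < G -> 0 < p -> 0 < w -> 0 < K s w ->
  crossing c G s p w = 0 -> ds c s p w = dc G s p w.
Proof.
  intros HG Hp Hw HK Hx. pose proof (dc_sub_ds c G s p w HG Hp Hw HK) as E.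
  rewrite Hx in E. unfold Rdiv in E. rewrite Rmult_0_l in E. lra.
Qed.

Lemma crossing_factor c G s p w : 0 < c -> 0 < G -> 0 < s -> 0 <= disc c G s p ->
  crossing c G s p w = c * G * s ^ 2 * (w - root1 c G s p) * (w - root2 c G s p).
Proof.
  intros Hc HG Hs HD. unfold crossing, root1, root2, K.
  assert (Hq : sqrt (disc c G s p) * sqrt (disc c G s p) = disc c G s p) by (apply sqrt_sqrt; auto).
  set (q := sqrt (disc c G s p)) in *. unfold disc in Hq.
  field_simplify; [|lra].
  replace (q ^ 2) with (q * q) by ring. rewrite Hq. field. lra.
Qed.

Lemma root1_le_root2 c G s p : 0 < c -> 0 < G -> 0 < s -> 0 <= p -> root1 c G s p <= root2 c G s p.
Proof.
  intros Hc HG Hs Hp. unfold root1, root2, Rdiv. apply Rmult_le_compat_r.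
  - left. positivity.
  - pose proof (Rmult_le_pos p _ Hp (sqrt_pos (disc c G s p))). lra.
Qed.

Lemma root1_lt_root2 c G s p : 0 < c -> 0 < G -> 0 < s -> 0 < p -> 0 < disc c G s p ->
  root1 c G s p < root2 c G s p.
Proof.
  intros Hc HG Hs Hp HD. unfold root1, root2, Rdiv. apply Rmult_lt_compat_r.
  - positivity.
  - pose proof (Rmult_lt_0_compat p _ Hp (sqrt_lt_R0 _ HD)). lra.
Qed.

Lemma crossing_root1 c G s p : 0 < c -> 0 < G -> 0 < s -> 0 <= disc c G s p ->
  crossing c G s p (root1 c G s p) = 0.
Proof. intros. rewrite crossing_factor by auto. ring. Qed.

Lemma crossing_root2 c G s p : 0 < c -> 0 < G -> 0 < s -> 0 <= disc c G s p ->
  crossing c G s p (root2 c G s p) = 0.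
Proof. intros. rewrite crossing_factor by auto. ring. Qed.

Lemma root_sum c G s p : 0 < c -> 0 < G -> 0 < s ->
  root1 c G s p + root2 c G s p = (p ^ 2 - 2 * c * G * s * (1 - s)) / (c * G * s ^ 2).
Proof. intros. unfold root1, root2. field. lra. Qed.

Lemma sqr_root_formula c G s p e : 0 < c -> 0 < G -> 0 < s -> 0 <= disc c G s p -> e * e = 1 ->
  ((p + e * sqrt (disc c G s p)) / (2 * s * sqrt (c * G))) ^ 2
  = (p ^ 2 - 2 * c * G * s * (1 - s) + e * p * sqrt (disc c G s p)) / (2 * c * G * s ^ 2).
Proof.
  intros Hc HG Hs HD He.
  assert (Hq : sqrt (disc c G s p) * sqrt (disc c G s p) = disc c G s p) by (apply sqrt_sqrt; auto).
  assert (Hr : sqrt (c * G) * sqrt (c * G) = c * G) by (apply sqrt_sqrt; nra).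
  assert (0 < sqrt (c * G)) by (apply sqrt_lt_R0; nra).
  set (q := sqrt (disc c G s p)) in *. set (r := sqrt (c * G)) in *.
  replace (((p + e * q) / (2 * s * r)) ^ 2)
    with ((p * p + 2 * e * p * q + (e * e) * (q * q)) / (4 * s ^ 2 * (r * r))) by (field; lra).
  rewrite He, Hq, Hr. unfold disc. field. lra.
Qed.

Lemma w1_root1 c G t tau p : 0 < c -> 0 < G -> 0 < tau / t -> 0 <= disc c G (tau / t) p ->
  w1 c G t tau p = root1 c G (tau / t) p.
Proof.
  intros. unfold w1, sr. fold (disc c G (tau / t) p).
  replace (p - sqrt (disc c G (tau / t) p)) with (p + (-1) * sqrt (disc c G (tau / t) p)) by ring.
  rewrite sqr_root_formula by (auto; ring). unfold root1. f_equal. ring.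
Qed.

Lemma w2_root2 c G t tau p : 0 < c -> 0 < G -> 0 < tau / t -> 0 <= disc c G (tau / t) p ->
  w2 c G t tau p = root2 c G (tau / t) p.
Proof.
  intros. unfold w2, sr. fold (disc c G (tau / t) p).
  replace (p + sqrt (disc c G (tau / t) p)) with (p + 1 * sqrt (disc c G (tau / t) p)) by ring.
  rewrite sqr_root_formula by (auto; ring). unfold root2. f_equal. ring.
Qed.

Lemma crossing_1 c G s p : crossing c G s p 1 = c * G - p ^ 2.
Proof. unfold crossing. rewrite K_1. ring. Qed.

Lemma crossing_ws c G s p : 0 < c -> 0 < s < 1 -> c < p ->
  crossing c G s p (ws c s p) = p ^ 2 * ws c s p * (G * ws c s p - c) / c.
Proof. intros. unfold crossing, K, ws. field. split; nra. Qed.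

Lemma crossing_wc c G s p : 0 < G -> 0 < s ->
  crossing c G s p (wc G s p) = p ^ 2 * (c - G * wc G s p) / G.
Proof. intros. unfold crossing, K, wc. field. lra. Qed.

Lemma ws_sub c G s p : 0 < c -> 0 < s < 1 -> c < p ->
  G * ws c s p - c = c * (plin c G s - p) / (p - c * s).
Proof. intros. unfold ws, plin. field. nra. Qed.

Lemma wc_sub c G s p : 0 < G -> 0 < s -> c - G * wc G s p = (plin c G s - p) / s.
Proof. intros. unfold wc, plin. field. lra. Qed.

Lemma disc_pos c G s p : 0 < c -> 0 < G -> c * G < p ^ 2 -> 0 < disc c G s p.
Proof.
  intros. assert (0 <= c * G * (2 * s - 1) ^ 2) by (apply Rmult_le_pos; [nra | apply pow2_ge_0]).
  unfold disc. nra.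
Qed.

Lemma disc_plin c G s : disc c G s (plin c G s) = (G * (1 - s) - c * s) ^ 2.
Proof. unfold disc, plin. ring. Qed.

Lemma disc_nonneg c G s p : 0 < c -> 0 < G -> 0 < s < 1 -> plin c G s <= p -> 0 <= disc c G s p.
Proof.
  intros. pose proof (disc_plin c G s). pose proof (pow2_ge_0 (G * (1 - s) - c * s)).
  assert (0 <= plin c G s) by (unfold plin; nra).
  assert (plin c G s ^ 2 <= p ^ 2) by (apply pow_incr; lra).
  unfold disc in *. lra.
Qed.

Section CrossingSign.

Variables c G s p : R.
Hypotheses (Hc : 0 < c) (HG : 0 < G) (Hs : 0 < s) (Hp : 0 <= p) (HD : 0 <= disc c G s p).

Local Notation r1 := (root1 c G s p).
Local Notation r2 := (root2 c G s p).
Let r1_le_r2 : r1 <= r2 := root1_le_root2 c G s p Hc HG Hs Hp.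
Let A_pos : 0 < c * G * s ^ 2. Proof. positivity. Qed.

Let crossing_nonneg_sign w : 0 <= crossing c G s p w <-> 0 <= (w - r1) * (w - r2).
Proof.
  rewrite crossing_factor, Rmult_assoc by auto. split; intros H.
  - apply Rmult_le_reg_l with (1 := A_pos). lra.
  - apply Rmult_le_pos; lra.
Qed.

Let crossing_nonpos_sign w : crossing c G s p w <= 0 <-> (w - r1) * (w - r2) <= 0.
Proof.
  rewrite crossing_factor, Rmult_assoc by auto. split; intros H.
  - apply Rmult_le_reg_l with (1 := A_pos). lra.
  - apply Rmult_le_0_l; lra.
Qed.

Lemma crossing_nonneg_iff w : 0 <= crossing c G s p w <-> w <= r1 \/ r2 <= w.
Proof.
  rewrite crossing_nonneg_sign. split.
  - intros H. destruct (Rle_lt_dec w r1); [now left|]. right. nra.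
  - intros [H | H]; nra.
Qed.

Lemma crossing_nonpos_iff w : crossing c G s p w <= 0 <-> r1 <= w <= r2.
Proof.
  rewrite crossing_nonpos_sign. split.
  - intros H. split; nra.
  - intros H. nra.
Qed.

Lemma crossing_neg_between w : crossing c G s p w < 0 -> r1 < w < r2.
Proof.
  intros H. destruct (Rlt_le_dec r1 w), (Rlt_le_dec w r2); try (split; assumption);
    assert (0 <= crossing c G s p w) by (apply crossing_nonneg_iff; lra); lra.
Qed.

End CrossingSign.

Lemma crossing_nonneg_of_disc_neg c G s p w : 0 < c -> 0 < G -> 0 < s ->
  disc c G s p < 0 -> 0 <= crossing c G s p w.
Proof.
  intros Hc HG Hs HD.
  assert (HA : 0 < 4 * (c * G * s ^ 2)) by positivity.
  assert (E : 4 * (c * G * s ^ 2) * crossing c G s p w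
              = (2 * (c * G * s ^ 2) * w + 2 * c * G * s * (1 - s) - p ^ 2) ^ 2
                + p ^ 2 * (- disc c G s p)) by (unfold crossing, disc, K; ring).
  pose proof (pow2_ge_0 (2 * (c * G * s ^ 2) * w + 2 * c * G * s * (1 - s) - p ^ 2)).
  assert (0 <= p ^ 2 * (- disc c G s p)) by (apply Rmult_le_pos; [apply pow2_ge_0 | lra]).
  apply Rmult_le_reg_l with (1 := HA). lra.
Qed.

Lemma crossing_nonneg_of_half c G s p w : 0 < c -> 0 < G -> 0 < s <= 1 / 2 ->
  p ^ 2 <= c * G -> 0 <= w <= 1 -> 0 <= crossing c G s p w.
Proof.
  intros Hc HG Hs Hp Hw.
  assert (E : K s w ^ 2 - w = (1 - w) * (1 - 2 * s + s ^ 2 * (1 - w))) by (unfold K; ring).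
  assert (0 <= (1 - w) * (1 - 2 * s + s ^ 2 * (1 - w))).
  { apply Rmult_le_pos; [lra|]. pose proof (pow2_ge_0 s). nra. }
  assert (p ^ 2 * w <= c * G * w) by (apply Rmult_le_compat_r; lra).
  assert (c * G * w <= c * G * K s w ^ 2) by (apply Rmult_le_compat_l; nra).
  unfold crossing. lra.
Qed.

(* [crossing] is a convex quadratic which is nonnegative and nondecreasing at [ws]. *)
Lemma crossing_nonneg_above_ws c G s p w : 0 < c -> 0 < G -> 0 < s < 1 -> c < p ->
  G * (1 - s) <= c * s -> p <= plin c G s -> ws c s p <= w -> 0 <= crossing c G s p w.
Proof.
  intros Hc HG Hs Hp Hsg Hl Hw.
  assert (Hcs : 0 < p - c * s) by nra.
  assert (Hws : 0 < ws c s p) by (apply ws_pos; auto).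
  assert (E : crossing c G s p w = crossing c G s p (ws c s p)
              + (2 * c * G * s * K s (ws c s p) - p ^ 2) * (w - ws c s p)
              + c * G * s ^ 2 * (w - ws c s p) ^ 2) by (unfold crossing, K; ring).
  assert (H0 : 0 <= crossing c G s p (ws c s p)).
  { rewrite crossing_ws by auto. apply Rdiv_le_0_compat; [|lra].
    apply Rmult_le_pos; [nra|]. rewrite ws_sub by auto. apply Rdiv_le_0_compat; nra. }
  assert (H1 : 0 <= 2 * c * G * s * K s (ws c s p) - p ^ 2).
  { set (a := G * (1 - s)). set (b := c * s).
    replace (2 * c * G * s * K s (ws c s p) - p ^ 2)
      with (p * (a * (b - a) + (a + b - p) * (a + p)) / (p - c * s))
      by (unfold K, ws, a, b; field; lra).
    unfold plin in Hl. fold a b in Hl, Hsg.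
    assert (0 <= a) by (unfold a; nra).
    apply Rdiv_le_0_compat; [|lra]. apply Rmult_le_pos; [lra|].
    apply Rplus_le_le_0_compat; apply Rmult_le_pos; lra. }
  assert (0 <= c * G * s ^ 2 * (w - ws c s p) ^ 2)
    by (apply Rmult_le_pos; [left; positivity | apply pow2_ge_0]).
  assert (0 <= (2 * c * G * s * K s (ws c s p) - p ^ 2) * (w - ws c s p))
    by (apply Rmult_le_pos; lra).
  lra.
Qed.

Lemma crossing_nonpos_above_wc c G s p w : 0 < c -> 0 < G -> 0 < s < 1 ->
  c * G <= p ^ 2 -> plin c G s <= p -> wc G s p <= w <= 1 -> crossing c G s p w <= 0.
Proof.
  intros Hc HG Hs Hsq Hl Hw.
  assert (Hp : 0 < p) by (unfold plin in Hl; nra).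
  assert (HD := disc_nonneg c G s p Hc HG Hs Hl).
  assert (H0 : crossing c G s p (wc G s p) <= 0).
  { rewrite crossing_wc, wc_sub by lra. apply Rmult_le_0_r; [|left; apply Rinv_0_lt_compat; lra].
    apply Rmult_le_0_l; [apply pow2_ge_0|]. apply Rmult_le_0_r; [lra|].
    left. apply Rinv_0_lt_compat. lra. }
  assert (H1 : crossing c G s p 1 <= 0) by (rewrite crossing_1; lra).
  rewrite (crossing_nonpos_iff c G s p) in H0, H1 |- * by lra. lra.
Qed.

(** * The area in regions V and VI *)

Lemma V_ordering c G s p : 0 < c -> c < G -> 0 < s < 1 -> c < p ->
  c * G < p ^ 2 -> p <= plin c G s ->
  wc G s p <= ws c s p /\ 0 < ws c s p /\ ws c s p <= root1 c G s p /\
  root1 c G s p < 1 < root2 c G s p.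
Proof.
  intros Hc HcG Hs Hp Hsq Hl.
  assert (HD := disc_pos c G s p Hc ltac:(lra) Hsq).
  pose proof (ws_pos c s p Hc Hs Hp). pose proof (ws_lt_1 c s p Hc Hs Hp).
  assert (Hr : root1 c G s p < 1 < root2 c G s p).
  { apply (crossing_neg_between c G s p); try lra. rewrite crossing_1. lra. }
  assert (Gws : 0 <= G * ws c s p - c).
  { rewrite ws_sub by auto. apply Rdiv_le_0_compat; nra. }
  assert (Gwc : 0 <= c - G * wc G s p).
  { rewrite wc_sub by lra. apply Rdiv_le_0_compat; lra. }
  repeat split; try lra.
  - apply Rmult_le_reg_l with G; lra.
  - assert (Hx : 0 <= crossing c G s p (ws c s p)).
    { rewrite crossing_ws by auto. apply Rdiv_le_0_compat; [|lra].
      apply Rmult_le_pos; [|lra]. apply Rmult_le_pos; [apply pow2_ge_0 | lra]. }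
    rewrite (crossing_nonneg_iff c G s p) in Hx by lra. lra.
Qed.

(* Integral of [ds] over [ws, root1] plus integral of [dc] over [root1, 1]. *)
Definition area_V (c G s p : R) : R :=
  ds_prim c s p (root1 c G s p) - ds_prim c s p (ws c s p) + (1 - dc_prim G s p (root1 c G s p)).

Lemma area_eq_area_V c G s p : 0 < c -> c < G -> 0 < s < 1 -> c < p ->
  c * G < p ^ 2 -> p <= plin c G s -> area c G s p = area_V c G s p.
Proof.
  intros Hc HcG Hs Hp Hsq Hl.
  destruct (V_ordering c G s p Hc HcG Hs Hp Hsq Hl) as (Hwc & Hws0 & Hws & Hr1 & Hr2).
  assert (HD := disc_pos c G s p Hc ltac:(lra) Hsq).
  unfold area, area_V.
  rewrite (RInt_piecewise3 (coop c G s p) (ds c s p) (dc G s p) (ws c s p) (root1 c G s p));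
    try lra.
  - rewrite RInt_ds, RInt_dc, dc_prim_1 by lra. ring.
  - apply ex_RInt_coop; lra.
  - intros x Hx. apply coop_eq_0. left. left. apply ds_neg; lra.
  - intros x Hx. assert (0 < K s x) by (apply K_pos; lra).
    apply coop_eq_ds. split.
    + apply Rlt_le, ds_pos_iff; lra.
    + apply ds_le_dc; try lra. apply (crossing_nonneg_iff c G s p); lra.
  - intros x Hx. assert (0 < K s x) by (apply K_pos; lra).
    apply coop_eq_dc. split.
    + apply Rlt_le, dc_pos_iff; lra.
    + apply dc_le_ds; try lra. apply (crossing_nonpos_iff c G s p); lra.
Qed.

Lemma VI_ordering c G s p : 0 < c -> c < G -> 0 < s < 1 -> c < p -> p < G ->
  p ^ 2 < c * G -> plin c G s <= p -> root1 c G s p < wc G s p ->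
  ws c s p <= wc G s p /\ 0 < wc G s p /\ wc G s p <= root2 c G s p /\ root2 c G s p < 1.
Proof.
  intros Hc HcG Hs Hp HpG Hsq Hl Hr1.
  assert (HD := disc_nonneg c G s p Hc ltac:(lra) Hs Hl).
  pose proof (wc_lt_1 G s p ltac:(lra) Hs HpG).
  assert (Gws : G * ws c s p - c <= 0).
  { rewrite ws_sub by auto. apply Rmult_le_0_r; [nra|]. left. apply Rinv_0_lt_compat. nra. }
  assert (Gwc : c - G * wc G s p <= 0).
  { rewrite wc_sub by lra. apply Rmult_le_0_r; [lra|]. left. apply Rinv_0_lt_compat. lra. }
  assert (Hr2 : crossing c G s p (wc G s p) <= 0).
  { rewrite crossing_wc by lra. apply Rmult_le_0_r; [|left; apply Rinv_0_lt_compat; lra].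
    apply Rmult_le_0_l; [apply pow2_ge_0 | lra]. }
  rewrite (crossing_nonpos_iff c G s p) in Hr2 by lra.
  repeat split; try lra.
  - apply Rmult_le_reg_l with G; lra.
  - apply Rmult_lt_reg_l with G; lra.
  - destruct (Rlt_le_dec (root2 c G s p) 1) as [|H1]; auto.
    assert (crossing c G s p 1 <= 0) by (apply (crossing_nonpos_iff c G s p); lra).
    rewrite crossing_1 in *. lra.
Qed.

(* Integral of [dc] over [wc, root2] plus integral of [ds] over [root2, 1]. *)
Definition area_VI (c G s p : R) : R :=
  dc_prim G s p (root2 c G s p) - dc_prim G s p (wc G s p)
  + (1 - c * s / p - ds_prim c s p (root2 c G s p)).

Lemma area_eq_area_VI c G s p : 0 < c -> c < G -> 0 < s < 1 -> c < p -> p < G ->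
  p ^ 2 < c * G -> plin c G s <= p -> root1 c G s p < wc G s p -> area c G s p = area_VI c G s p.
Proof.
  intros Hc HcG Hs Hp HpG Hsq Hl Hr1.
  destruct (VI_ordering c G s p Hc HcG Hs Hp HpG Hsq Hl Hr1) as (Hws & Hwc0 & Hwc & Hr2).
  assert (HD := disc_nonneg c G s p Hc ltac:(lra) Hs Hl).
  unfold area, area_VI.
  rewrite (RInt_piecewise3 (coop c G s p) (dc G s p) (ds c s p) (wc G s p) (root2 c G s p));
    try lra.
  - rewrite RInt_ds, RInt_dc, ds_prim_1 by lra. ring.
  - apply ex_RInt_coop; lra.
  - intros x Hx. apply coop_eq_0. right. left. apply dc_neg; lra.
  - intros x Hx. assert (0 < K s x) by (apply K_pos; lra).
    apply coop_eq_dc. split.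
    + apply Rlt_le, dc_pos_iff; lra.
    + apply dc_le_ds; try lra. apply (crossing_nonpos_iff c G s p); lra.
  - intros x Hx. assert (0 < K s x) by (apply K_pos; lra).
    apply coop_eq_ds. split.
    + apply Rlt_le, ds_pos_iff; lra.
    + apply ds_le_dc; try lra. apply (crossing_nonneg_iff c G s p); lra.
Qed.

(* Envelope argument: the moving endpoints contribute nothing to the derivative because
   the integrand is continuous across [a p] ([crossing] vanishes there) and vanishes at [b p]. *)
Lemma is_derive_area_V_gen c G s (a b : R -> R) p (a' b' : R) :
  0 < c -> 0 < G -> 0 < s < 1 -> 0 < p -> 0 < a p -> 0 < b p ->
  is_derive a p a' -> is_derive b p b' ->
  crossing c G s p (a p) = 0 -> ds c s p (b p) = 0 ->
  is_derive (fun p => ds_prim c s p (a p) - ds_prim c s p (b p) + (1 - dc_prim G s p (a p))) p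
    (c / p ^ 2 * (Ls s (a p) - Ls s (b p)) + ln (K s (a p)) / (G * s)).
Proof.
  intros Hc HG Hs Hp Ha Hb Da Db Xa Sb.
  assert (HK : 0 < K s (a p)) by (apply K_pos; lra).
  assert (HA := ds_eq_dc_of_crossing c G s p (a p) HG Hp Ha HK Xa).
  assert (exa : ex_derive a p) by (exists a'; auto).
  assert (exb : ex_derive b p) by (exists b'; auto).
  unfold ds_prim, dc_prim, Ls, K. unfold K in HK.
  auto_derive.
  - repeat split; auto; lra.
  - replace (Derive (fun x => a x) p) with a' by (symmetry; apply is_derive_unique; auto).
    replace (Derive (fun x => b x) p) with b' by (symmetry; apply is_derive_unique; auto).
    match goal with |- ?E = _ => replace E with
      (a' * (ds c s p (a p) - dc G s p (a p)) - b' * ds c s p (b p) +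
       (c / p ^ 2 * (Ls s (a p) - Ls s (b p)) + ln (K s (a p)) / (G * s))) end.
    + rewrite HA, Sb. unfold K, Ls. ring.
    + match goal with |- ?x = ?y => change (@eq R x y) end.
      unfold ds, dc, Ls, K. change RinvImpl.Rinv with Rinv.
      replace (1 + - ((1 + - a p) * s)) with (1 - (1 - a p) * s) by ring.
      field. repeat split; lra.
Qed.

Lemma is_derive_area_VI_gen c G s (a b : R -> R) p (a' b' : R) :
  0 < c -> 0 < G -> 0 < s < 1 -> 0 < p -> 0 < a p -> 0 < b p ->
  is_derive a p a' -> is_derive b p b' ->
  crossing c G s p (a p) = 0 -> dc G s p (b p) = 0 ->
  is_derive (fun p => dc_prim G s p (a p) - dc_prim G s p (b p)
                      + (1 - c * s / p - ds_prim c s p (a p))) p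
    (- (ln (K s (a p)) - ln (K s (b p))) / (G * s) + c / p ^ 2 * (s - Ls s (a p))).
Proof.
  intros Hc HG Hs Hp Ha Hb Da Db Xa Cb.
  assert (HK : 0 < K s (a p)) by (apply K_pos; lra).
  assert (HKb : 0 < K s (b p)) by (apply K_pos; lra).
  assert (HA := ds_eq_dc_of_crossing c G s p (a p) HG Hp Ha HK Xa).
  assert (exa : ex_derive a p) by (exists a'; auto).
  assert (exb : ex_derive b p) by (exists b'; auto).
  unfold ds_prim, dc_prim, Ls, K. unfold K in HK, HKb.
  auto_derive.
  - repeat split; auto; lra.
  - replace (Derive (fun x => a x) p) with a' by (symmetry; apply is_derive_unique; auto).
    replace (Derive (fun x => b x) p) with b' by (symmetry; apply is_derive_unique; auto).
    match goal with |- ?E = _ => replace E with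
      (a' * (dc G s p (a p) - ds c s p (a p)) - b' * dc G s p (b p) +
       (- (ln (K s (a p)) - ln (K s (b p))) / (G * s) + c / p ^ 2 * (s - Ls s (a p)))) end.
    + rewrite HA, Cb. unfold K, Ls. ring.
    + match goal with |- ?x = ?y => change (@eq R x y) end.
      unfold ds, dc, Ls, K. change RinvImpl.Rinv with Rinv.
      replace (1 + - ((1 + - a p) * s)) with (1 - (1 - a p) * s) by ring.
      replace (1 + - ((1 + - b p) * s)) with (1 - (1 - b p) * s) by ring.
      field. repeat split; lra.
Qed.

Definition area_V_deriv (c G s p : R) : R :=
  c / p ^ 2 * (Ls s (root1 c G s p) - Ls s (ws c s p)) + ln (K s (root1 c G s p)) / (G * s).
Definition area_VI_deriv (c G s p : R) : R :=
  - (ln (K s (root2 c G s p)) - ln (K s (wc G s p))) / (G * s)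
  + c / p ^ 2 * (s - Ls s (root2 c G s p)).

Lemma is_derive_area_V c G s p : 0 < c -> 0 < G -> 0 < s < 1 -> c < p -> 0 < disc c G s p ->
  0 < root1 c G s p -> is_derive (area_V c G s) p (area_V_deriv c G s p).
Proof.
  intros Hc HG Hs Hp HD Hr.
  apply (is_derive_area_V_gen c G s (root1 c G s) (ws c s) p
           (Derive (root1 c G s) p) (Derive (ws c s) p)); try lra.
  - apply ws_pos; lra.
  - apply Derive_correct. unfold root1, disc in *. auto_derive.
    repeat split; try lra; apply Rgt_not_eq; positivity.
  - apply Derive_correct. unfold ws. auto_derive. nra.
  - apply crossing_root1; lra.
  - apply ds_ws; lra.
Qed.

Lemma is_derive_area_VI c G s p : 0 < c -> 0 < G -> 0 < s < 1 -> 0 < p -> 0 < disc c G s p ->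
  0 < root2 c G s p -> 0 < wc G s p -> is_derive (area_VI c G s) p (area_VI_deriv c G s p).
Proof.
  intros Hc HG Hs Hp HD Hr Hw.
  apply (is_derive_area_VI_gen c G s (root2 c G s) (wc G s) p
           (Derive (root2 c G s) p) (Derive (wc G s) p)); try lra.
  - apply Derive_correct. unfold root2, disc in *. auto_derive.
    repeat split; try lra; apply Rgt_not_eq; positivity.
  - apply Derive_correct. unfold wc. auto_derive. exact I.
  - apply crossing_root2; lra.
  - apply dc_wc; lra.
Qed.

Lemma V_identity c G s p : 0 < c -> c < G -> 0 < s < 1 -> c < p ->
  c * G < p ^ 2 -> p <= plin c G s ->
  RInt (dc G s p) (root1 c G s p) 1 - RInt (ds c s p) (ws c s p) (root1 c G s p)
  = 1 - 2 * root1 c G s p + ws c s p + p * area_V_deriv c G s p.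
Proof.
  intros Hc HcG Hs Hp Hsq Hl.
  destruct (V_ordering c G s p Hc HcG Hs Hp Hsq Hl) as (_ & Hws & Hr1 & Hr & _).
  rewrite RInt_dc, RInt_ds, dc_prim_1 by lra.
  unfold dc_prim, ds_prim, area_V_deriv, Ls. field. lra.
Qed.

Lemma VI_identity c G s p : 0 < c -> c < G -> 0 < s < 1 -> c < p -> p < G ->
  p ^ 2 < c * G -> plin c G s <= p -> root1 c G s p < wc G s p ->
  RInt (ds c s p) (root2 c G s p) 1 - RInt (dc G s p) (wc G s p) (root2 c G s p)
  = 1 - 2 * root2 c G s p + wc G s p - p * area_VI_deriv c G s p.
Proof.
  intros Hc HcG Hs Hp HpG Hsq Hl Hr1.
  destruct (VI_ordering c G s p Hc HcG Hs Hp HpG Hsq Hl Hr1) as (_ & Hwc & Hr2 & Hr).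
  rewrite RInt_dc, RInt_ds, ds_prim_1 by lra.
  unfold dc_prim, ds_prim, area_VI_deriv, Ls. field. lra.
Qed.

Lemma VI_roots c G s p : 0 < c -> 0 < G -> 0 < s < 1 -> 0 < p -> plin c G s < p ->
  0 < disc c G s p /\ root1 c G s p < wc G s p < root2 c G s p.
Proof.
  intros Hc HG Hs Hp Hl.
  assert (HD := disc_nonneg c G s p Hc HG Hs ltac:(lra)).
  assert (Hwc : crossing c G s p (wc G s p) < 0).
  { rewrite crossing_wc, wc_sub by lra. apply Rdiv_neg_pos; [|lra].
    apply Rmult_pos_neg; [positivity | apply Rdiv_neg_pos; lra]. }
  apply (crossing_neg_between c G s p) in Hwc; try lra.
  split; [|lra]. destruct HD as [|HD]; auto.
  unfold root1, root2 in Hwc. rewrite <- HD, sqrt_0 in Hwc. lra.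
Qed.

Lemma VI_boundary_roots c G s p : 0 < c -> 0 < G -> 0 < s < 1 ->
  p = plin c G s -> G * (1 - s) < c * s ->
  0 < disc c G s p /\ root1 c G s p < wc G s p /\ wc G s p = root2 c G s p.
Proof.
  intros Hc HG Hs Hl Hgs.
  assert (HD : 0 < disc c G s p) by (rewrite Hl, disc_plin; nra).
  assert (Hp : 0 < p) by (rewrite Hl; unfold plin; nra).
  assert (Hvertex : root1 c G s p + root2 c G s p < 2 * wc G s p).
  { rewrite root_sum by lra. apply Rmult_lt_reg_r with (c * G * s ^ 2); [positivity|].
    replace ((p ^ 2 - 2 * c * G * s * (1 - s)) / (c * G * s ^ 2) * (c * G * s ^ 2))
      with (p ^ 2 - 2 * c * G * s * (1 - s)) by (field; lra).
    unfold wc. rewrite Hl. unfold plin. field_simplify; [|lra].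
    assert (0 <= G * (1 - s)) by nra. nra. }
  assert (H0 : crossing c G s p (wc G s p) = 0).
  { rewrite crossing_wc, wc_sub, Hl by lra. unfold Rminus. rewrite Rplus_opp_r. field. lra. }
  rewrite crossing_factor in H0 by lra.
  pose proof (root1_lt_root2 c G s p Hc HG ltac:(lra) Hp HD).
  assert (0 < c * G * s ^ 2) by positivity.
  destruct (Rmult_integral _ _ H0) as [E1 | E1]; [destruct (Rmult_integral _ _ E1) as [E2 | E2]|];
    repeat split; lra.
Qed.

(** * Comparison of areas *)

Lemma ds_lt_mono c s p s' p' x : 0 < c -> 0 < s <= s' -> s' < 1 -> 0 < p <= p' ->
  (s < s' \/ p < p') -> 0 < x < 1 -> ds c s p x < ds c s' p' x.
Proof.
  intros Hc Hs Hs1 Hp Hlt Hx.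
  assert (E : ds c s' p' x - ds c s p x
              = c / x * ((1 - x) * ((s' - s) * p) + K s x * (p' - p)) / (p * p')).
  { unfold ds, K. field. lra. }
  assert (0 < K s x) by (apply K_pos; lra).
  assert (0 < (1 - x) * ((s' - s) * p) + K s x * (p' - p)).
  { destruct Hlt.
    - assert (0 < (1 - x) * ((s' - s) * p)) by positivity.
      assert (0 <= K s x * (p' - p)) by (apply Rmult_le_pos; lra). lra.
    - assert (0 <= (1 - x) * ((s' - s) * p)) by (apply Rmult_le_pos; nra).
      assert (0 < K s x * (p' - p)) by positivity. lra. }
  assert (0 < c / x * ((1 - x) * ((s' - s) * p) + K s x * (p' - p)) / (p * p')).
  { apply Rdiv_lt_0_compat; [apply Rmult_lt_0_compat|]; try positivity. }
  lra.
Qed.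

Lemma dc_lt_mono G s p s' p' x : 0 < G -> 0 < s' <= s -> s < 1 -> 0 < p' <= p ->
  (s' < s \/ p' < p) -> 0 < x < 1 -> dc G s p x < dc G s' p' x.
Proof.
  intros HG Hs Hs1 Hp Hlt Hx.
  assert (K1 : 0 < K s x) by (apply K_pos; lra).
  assert (K2 : 0 < K s' x) by (apply K_pos; lra).
  assert (E : dc G s' p' x - dc G s p x
              = ((p - p') * K s' x + p' * (1 - x) * (s - s')) / (G * K s x * K s' x)).
  { unfold dc. unfold K in *. field. repeat split; lra. }
  assert (0 < (p - p') * K s' x + p' * (1 - x) * (s - s')).
  { destruct Hlt.
    - assert (0 <= (p - p') * K s' x) by (apply Rmult_le_pos; lra).
      assert (0 < p' * (1 - x) * (s - s')) by positivity. lra.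
    - assert (0 < (p - p') * K s' x) by positivity.
      assert (0 <= p' * (1 - x) * (s - s')) by (apply Rmult_le_pos; nra). lra. }
  assert (0 < ((p - p') * K s' x + p' * (1 - x) * (s - s')) / (G * K s x * K s' x))
    by positivity.
  lra.
Qed.

Lemma area_le_ds_pos c G s p : 0 < c -> 0 < G -> 0 < s < 1 -> c < p ->
  area c G s p <= RInt (fun w => Rmax (ds c s p w) 0) 0 1.
Proof.
  intros. apply RInt_le; [lra | apply ex_RInt_coop | apply ex_RInt_ds_pos |]; try lra.
  intros w _. apply Rle_max_compat_r, Rmin_l.
Qed.

Lemma area_le_dc_pos c G s p : 0 < c -> 0 < G -> 0 < s < 1 -> c < p ->
  area c G s p <= RInt (fun w => Rmax (dc G s p w) 0) 0 1.
Proof.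
  intros. apply RInt_le; [lra | apply ex_RInt_coop | apply ex_RInt_dc_pos |]; try lra.
  intros w _. apply Rle_max_compat_r, Rmin_r.
Qed.

Lemma area_eq_ds_pos c G s p : 0 < G -> 0 < s < 1 -> 0 < p ->
  (forall w, 0 < w < 1 -> 0 < ds c s p w -> 0 <= crossing c G s p w) ->
  area c G s p = RInt (fun w => Rmax (ds c s p w) 0) 0 1.
Proof.
  intros HG Hs Hp Hregime. apply RInt_ext. intros w Hw.
  rewrite Rmin_left, Rmax_right in Hw by lra.
  destruct (Rle_lt_dec (ds c s p w) 0).
  - rewrite coop_eq_0, Rmax_right; auto.
  - rewrite coop_eq_ds, Rmax_left; try lra. split; [lra|].
    apply ds_le_dc; try lra; [apply K_pos; lra | apply Hregime; lra].
Qed.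

Lemma area_eq_dc_pos c G s p : 0 < G -> 0 < s < 1 -> 0 < p ->
  (forall w, 0 < w < 1 -> 0 < dc G s p w -> crossing c G s p w <= 0) ->
  area c G s p = RInt (fun w => Rmax (dc G s p w) 0) 0 1.
Proof.
  intros HG Hs Hp Hregime. apply RInt_ext. intros w Hw.
  rewrite Rmin_left, Rmax_right in Hw by lra.
  destruct (Rle_lt_dec (dc G s p w) 0).
  - rewrite coop_eq_0, Rmax_right; auto.
  - rewrite coop_eq_dc, Rmax_left; try lra. split; [lra|].
    apply dc_le_ds; try lra; [apply K_pos; lra | apply Hregime; lra].
Qed.

Lemma area_lt_of_ds_regime c G s p s' p' : 0 < c -> 0 < G -> 0 < s <= s' -> s' < 1 ->
  c < p <= p' -> (s < s' \/ p < p') ->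
  (forall w, 0 < w < 1 -> 0 < ds c s' p' w -> 0 <= crossing c G s' p' w) ->
  area c G s p < area c G s' p'.
Proof.
  intros Hc HG Hs Hs1 Hp Hlt Hregime.
  apply Rle_lt_trans with (1 := area_le_ds_pos c G s p Hc HG ltac:(lra) ltac:(lra)).
  rewrite (area_eq_ds_pos c G s' p') by (auto; lra).
  pose proof (ws_pos c s p Hc ltac:(lra) ltac:(lra)).
  pose proof (ws_lt_1 c s p Hc ltac:(lra) ltac:(lra)).
  apply RInt_lt_split with (m := ws c s p); try (apply ex_RInt_ds_pos); try lra.
  - intros x Hx. rewrite (Rmax_right (ds c s p x)) by (left; apply ds_neg; lra). apply Rmax_r.
  - intros x Hx. apply continuous_Rmax_comp; [apply continuous_ds; lra | apply continuous_const].
  - intros x Hx. apply continuous_Rmax_comp; [apply continuous_ds; lra | apply continuous_const].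
  - intros x Hx. assert (0 < ds c s p x) by (apply ds_pos_iff; lra).
    rewrite (Rmax_left (ds c s p x)) by lra.
    apply Rlt_le_trans with (2 := Rmax_l _ 0). apply ds_lt_mono; lra.
Qed.

Lemma area_lt_of_dc_regime c G s p s' p' : 0 < c -> 0 < G -> 0 < s' <= s -> s < 1 ->
  c < p' <= p -> p < G -> (s' < s \/ p' < p) ->
  (forall w, 0 < w < 1 -> 0 < dc G s' p' w -> crossing c G s' p' w <= 0) ->
  area c G s p < area c G s' p'.
Proof.
  intros Hc HG Hs Hs1 Hp HpG Hlt Hregime.
  apply Rle_lt_trans with (1 := area_le_dc_pos c G s p Hc HG ltac:(lra) ltac:(lra)).
  rewrite (area_eq_dc_pos c G s' p') by (auto; lra).
  pose proof (wc_lt_1 G s p HG ltac:(lra) HpG).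
  assert (Hm : 0 <= Rmax (wc G s p) 0 < 1) by (split; [apply Rmax_r | apply Rmax_lub_lt; lra]).
  assert (Hm1 := Rmax_l (wc G s p) 0).
  apply RInt_lt_split with (m := Rmax (wc G s p) 0); try (apply ex_RInt_dc_pos); try lra.
  - intros x Hx. assert (x < wc G s p).
    { destruct (Rle_lt_dec (wc G s p) 0);
        [rewrite Rmax_right in Hx | rewrite Rmax_left in Hx]; lra. }
    rewrite (Rmax_right (dc G s p x)) by (left; apply dc_neg; lra). apply Rmax_r.
  - intros x Hx. apply continuous_Rmax_comp; [|apply continuous_const].
    apply continuous_dc; [lra | apply K_pos; lra].
  - intros x Hx. apply continuous_Rmax_comp; [|apply continuous_const].
    apply continuous_dc; [lra | apply K_pos; lra].
  - intros x Hx. assert (0 < dc G s p x) by (apply dc_pos_iff; lra).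
    rewrite (Rmax_left (dc G s p x)) by lra.
    apply Rlt_le_trans with (2 := Rmax_l _ 0). apply dc_lt_mono; lra.
Qed.

(** * The closure of region IV *)

Definition in_IV (c G s p : R) : Prop :=
  c < p < G /\ 4 * c * G * s * (1 - s) <= p ^ 2 /\ p < plin c G s /\ p ^ 2 < c * G /\
  1 / 2 < s < G / (G + c).

Definition near_IV (c G s p : R) : Prop :=
  forall e, 0 < e -> exists s' p', in_IV c G s' p' /\ Rabs (s - s') < e /\ Rabs (p - p') < e.

Lemma region_IV_of_in_IV c G t s p : 0 < c -> c < G -> 0 < t -> in_IV c G s p ->
  region_IV c G t (s * t) p.
Proof.
  intros Hc HcG Ht (Hp & HD & Hl & Hsq & Hs).
  assert (Hs1 : G / (G + c) < 1) by (apply Rlt_div_l; lra).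
  destruct (sqrt_cG c G Hc HcG) as [Hr _].
  unfold region_IV, inD, sr, plin in *. replace (s * t / t) with s by (field; lra).
  pose proof (sqrt_pos (c * G)). repeat split; nra.
Qed.

Lemma in_closure_of_near_IV c G t tau p : 0 < c -> c < G -> 0 < t -> near_IV c G (tau / t) p ->
  in_closure (region_IV c G t) tau p.
Proof.
  intros Hc HcG Ht Hnear eps Heps.
  replace tau with (tau / t * t) by (field; lra). set (s := tau / t) in *. clearbody s.
  assert (Hm : 0 < Rmin eps (eps / t)) by (apply Rmin_glb_lt; positivity).
  destruct (Hnear _ Hm) as (s' & p' & HIV & Hs & Hp).
  pose proof (Rmin_l eps (eps / t)). pose proof (Rmin_r eps (eps / t)).
  exists (s' * t), p'. split; [|split].
  - apply region_IV_of_in_IV; auto.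
  - replace (s * t - s' * t) with ((s - s') * t) by ring.
    rewrite Rabs_mult, (Rabs_right t) by lra. apply Rlt_div_r; lra.
  - lra.
Qed.

Lemma near_IV_of_curve c G s p (sc pc : R -> R) M : 0 < M ->
  at_right 0 (fun e => 0 < e -> in_IV c G (sc e) (pc e) /\
                                Rabs (s - sc e) <= M * e /\ Rabs (p - pc e) <= M * e) ->
  near_IV c G s p.
Proof.
  intros HM Hev eps Heps.
  destruct (filter_and _ _ Hev (at_right_0_lt (eps / (2 * M)) ltac:(positivity))) as [d Hd].
  assert (Hd0 := cond_pos d).
  destruct (Hd (d / 2)) as [Hcurve He]; [| lra |].
  - cbv [ball]; simpl. unfold AbsRing_ball, abs, minus, plus, opp; simpl.
    rewrite Rabs_right; lra.
  - destruct (Hcurve ltac:(lra)) as (HIV & Hs & Hp).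
    exists (sc (d / 2)), (pc (d / 2)). split; auto.
    apply Rlt_div_r in He; [|lra].
    split; nra.
Qed.

Lemma near_IV_refl c G s p : in_IV c G s p -> near_IV c G s p.
Proof.
  intros H e He. exists s, p. rewrite !Rminus_diag, Rabs_R0. auto.
Qed.

Lemma near_IV_sqrt_edge c G s p : 0 < c -> c < G -> c < p < G -> p ^ 2 = c * G ->
  p <= plin c G s -> 1 / 2 < s -> c * s < G * (1 - s) -> near_IV c G s p.
Proof.
  intros Hc HcG Hp Hsq Hl Hs1 Hs2.
  assert (Hm : 0 < c * G * (2 * s - 1) ^ 2 / (2 * p)) by positivity.
  apply near_IV_of_curve with (sc := fun _ => s) (pc := fun e => p - e) (M := 1); [lra|].
  apply (filter_imp (fun e => e < p - c /\ e < c * G * (2 * s - 1) ^ 2 / (2 * p))).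
  2: apply filter_and; apply at_right_0_lt; lra.
  intros e [He1 He2] He0.
  apply Rlt_div_r in He2; [|lra].
  rewrite Rminus_diag, Rabs_R0. replace (p - (p - e)) with e by ring. rewrite Rabs_right by lra.
  repeat split; try lra; try nra. apply Rlt_div_r; lra.
Qed.

Lemma near_IV_sqrt_half c G p : 0 < c -> c < G -> c < p < G -> p ^ 2 = c * G ->
  near_IV c G (1 / 2) p.
Proof.
  intros Hc HcG Hp Hsq.
  assert (Hgap : p < (G + c) / 2) by nra.
  assert (HcGp : 0 < c * G / p) by positivity.
  apply near_IV_of_curve with (sc := fun e => 1 / 2 + e) (pc := fun e => p - c * G / p * e ^ 2)
    (M := 1 + c * G / p); [lra|].
  apply (filter_imp (fun e => e < 1 /\ e < ((G + c) / 2 - p) / (G - c) /\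
      e < (G - c) / (2 * (G + c)) /\ e < (p - c) / (c * G / p))).
  2: repeat apply filter_and; apply at_right_0_lt; positivity.
  intros e (He1 & He2 & He3 & He4) He0.
  apply Rlt_div_r in He2, He3, He4; try lra.
  assert (0 < c * G / p * e ^ 2 < c * G / p * e)
    by (split; [positivity | apply Rmult_lt_compat_l; nra]).
  assert (Hsq' : c * G - 2 * c * G * e ^ 2 <= (p - c * G / p * e ^ 2) ^ 2).
  { replace (c * G - 2 * c * G * e ^ 2) with (p ^ 2 - 2 * p * (c * G / p * e ^ 2))
      by (rewrite Hsq; field; lra).
    pose proof (pow2_ge_0 (c * G / p * e ^ 2)). nra. }
  replace (1 / 2 - (1 / 2 + e)) with (- e) by ring.
  replace (p - (p - c * G / p * e ^ 2)) with (c * G / p * e ^ 2) by ring.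
  rewrite Rabs_Ropp, !Rabs_right by nra.
  unfold in_IV, plin. repeat split; try nra.
  apply Rlt_div_r; lra.
Qed.

(* At s = G/(G+c) the edge p = plin is tangent to p^2 = 4cGs(1-s), hence the correction
   [k e^2]. *)
Lemma near_IV_plin_edge c G s p : 0 < c -> c < G -> c < p < G -> p ^ 2 < c * G ->
  p = plin c G s -> 1 / 2 < s -> c * s <= G * (1 - s) -> near_IV c G s p.
Proof.
  intros Hc HcG Hp Hsq Hl Hs1 Hs2.
  destruct (sqrt_cG c G Hc HcG) as [Hr [Hcr HrG]].
  pose proof (sqrt_pos (c * G)).
  assert (Hpr : p < sqrt (c * G)) by nra.
  set (k := (G + c) ^ 2 / (2 * G)).
  assert (Hk : 0 < k) by (unfold k; positivity).
  apply near_IV_of_curve with (sc := fun e => s - e) (pc := fun e => plin c G (s - e) - k * e ^ 2)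
    (M := 1 + G - c + k); [lra|].
  apply (filter_imp (fun e => e < 1 /\ e < s - 1 / 2 /\ e < (p - c) / k /\
      e < (sqrt (c * G) - p) / (G - c))).
  2: repeat apply filter_and; apply at_right_0_lt; positivity.
  intros e (He1 & He2 & He3 & He4) He0.
  apply Rlt_div_r in He3, He4; try lra.
  assert (Hpl : plin c G (s - e) = p + (G - c) * e) by (rewrite Hl; unfold plin; ring).
  assert (Hke : 0 < k * e ^ 2 <= k * e)
    by (split; [positivity | apply Rmult_le_compat_l; nra]).
  assert (Hcone : (G + c) * e <= G - (G + c) * (s - e)) by nra.
  assert (Hwedge : 2 * G * (k * e ^ 2) <= (G - (G + c) * (s - e)) ^ 2).
  { replace (2 * G * (k * e ^ 2)) with (((G + c) * e) ^ 2) by (unfold k; field; lra).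
    apply pow_incr. split; nra. }
  cbv beta. assert (HLG : plin c G (s - e) <= G) by (unfold plin; nra).
  remember (plin c G (s - e)) as L eqn:HL.
  assert (Hp' : c < L - k * e ^ 2 < sqrt (c * G)) by nra.
  assert (HD : 4 * c * G * (s - e) * (1 - (s - e)) <= (L - k * e ^ 2) ^ 2).
  { assert (E : L ^ 2 - 4 * c * G * (s - e) * (1 - (s - e)) = (G - (G + c) * (s - e)) ^ 2)
      by (rewrite HL; unfold plin; ring).
    assert ((k * e ^ 2) * L <= (k * e ^ 2) * G) by (apply Rmult_le_compat_l; lra).
    assert (E2 : (L - k * e ^ 2) ^ 2 = L ^ 2 - 2 * (k * e ^ 2) * L + (k * e ^ 2) ^ 2) by ring.
    pose proof (pow2_ge_0 (k * e ^ 2)). lra. }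
  replace (s - (s - e)) with e by ring. rewrite Rabs_right by lra.
  replace (p - (L - k * e ^ 2)) with (k * e ^ 2 - (G - c) * e) by lra.
  repeat split; try lra; try nra.
  - apply Rlt_div_r; nra.
  - apply Rabs_le. split; nra.
Qed.

(** * Maximisers *)

Definition area_max (c G s p : R) : Prop :=
  forall s' p', 0 < s' < 1 -> c < p' < G -> area c G s' p' <= area c G s p.

Lemma not_area_max_of_lt c G s p s' p' : 0 < s' < 1 -> c < p' < G ->
  area c G s p < area c G s' p' -> ~ area_max c G s p.
Proof. intros Hs Hp Hlt Hmax. specialize (Hmax s' p' Hs Hp). lra. Qed.

Lemma area_max_scaled c G t tau p : 0 < t ->
  (forall tau' p', inD c G t tau' p' -> coop_area c G t tau' p' <= coop_area c G t tau p) ->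
  area_max c G (tau / t) p.
Proof.
  intros Ht Hmax s' p' Hs' Hp'.
  specialize (Hmax (s' * t) p' ltac:(unfold inD; split; nra)).
  rewrite !coop_area_scaled in Hmax. replace (s' * t / t) with s' in Hmax by (field; lra).
  exact Hmax.
Qed.

Lemma plin_gt_of_small_s c G s p : 0 < c -> c < G -> 0 < s <= 1 / 2 -> 0 < p ->
  p ^ 2 <= c * G -> p < plin c G s.
Proof.
  intros Hc HcG Hs Hp Hsq. unfold plin.
  assert (E : ((G + c) / 2) ^ 2 = c * G + ((G - c) / 2) ^ 2) by field.
  assert (0 < ((G - c) / 2) ^ 2) by (apply pow_lt; lra).
  assert (p < (G + c) / 2).
  { destruct (Rlt_le_dec p ((G + c) / 2)) as [|Hge]; auto.
    assert (((G + c) / 2) ^ 2 <= p ^ 2) by (apply pow_incr; lra). lra. }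
  nra.
Qed.

Lemma plin_lt_of_large_s c G s p : 0 < c -> c < G -> 0 < s < 1 -> G * (1 - s) <= c * s ->
  0 < p -> c * G <= p ^ 2 -> plin c G s < p.
Proof.
  intros Hc HcG Hs Hgs Hp Hsq.
  assert (Hh : plin c G s * (G + c) <= 2 * G * c) by (unfold plin; nra).
  assert (Hhm : (2 * G * c) ^ 2 < c * G * (G + c) ^ 2).
  { assert (0 < c * G * (G - c) ^ 2) by positivity. nra. }
  destruct (Rlt_le_dec (plin c G s) p) as [|Hle]; auto. exfalso.
  assert (p * (G + c) <= 2 * G * c) by nra.
  assert ((p * (G + c)) ^ 2 <= (2 * G * c) ^ 2) by (apply pow_incr; nra).
  assert (c * G * (G + c) ^ 2 <= p ^ 2 * (G + c) ^ 2)
    by (apply Rmult_le_compat_r; [apply pow2_ge_0 | lra]).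
  replace ((p * (G + c)) ^ 2) with (p ^ 2 * (G + c) ^ 2) in * by ring. lra.
Qed.

Lemma area_V_deriv_eq_0 c G s p : 0 < c -> c < G -> 0 < s < 1 -> c < p < G ->
  c * G < p ^ 2 -> p < plin c G s -> area_max c G s p -> area_V_deriv c G s p = 0.
Proof.
  intros Hc HcG Hs Hp Hsq Hl Hmax.
  destruct (sqrt_cG c G Hc HcG) as [Hr Hcr].
  destruct (exists_pos_le (p - sqrt (c * G)) (plin c G s - p) (G - p))
    as (h & Hh & Hh1 & Hh2 & Hh3); try nra.
  destruct (V_ordering c G s p Hc HcG Hs ltac:(lra) Hsq ltac:(lra)) as (_ & Hws & Hr1 & _).
  apply (is_derive_local_max (area_V c G s) p (area_V_deriv c G s p) h); auto.
  - apply is_derive_area_V; try lra. apply disc_pos; lra.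
  - intros y Hy. rewrite <- !area_eq_area_V by (try lra; nra). apply Hmax; lra.
Qed.

Lemma V_boundary_not_max c G s p : 0 < c -> c < G -> 0 < s < 1 -> c < p < G ->
  c * G < p ^ 2 -> p = plin c G s -> ~ area_max c G s p.
Proof.
  intros Hc HcG Hs Hp Hsq Hl Hmax.
  destruct (sqrt_cG c G Hc HcG) as [Hr Hcr].
  destruct (V_ordering c G s p Hc HcG Hs ltac:(lra) Hsq ltac:(lra)) as (_ & Hws & Hr1 & Hr1' & Hr2).
  assert (HD := disc_pos c G s p Hc ltac:(lra) Hsq).
  assert (Hwsr : ws c s p = root1 c G s p).
  { assert (H0 : crossing c G s p (ws c s p) = 0).
    { rewrite crossing_ws, ws_sub, Hl by lra. field. split; nra. }
    assert (crossing c G s p (ws c s p) <= 0) by lra.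
    rewrite (crossing_nonpos_iff c G s p) in * by lra. lra. }
  assert (Hneg : area_V_deriv c G s p < 0).
  { unfold area_V_deriv. rewrite Hwsr, Rminus_diag, Rmult_0_r, Rplus_0_l.
    apply Rdiv_neg_pos; [|positivity]. rewrite <- ln_1.
    apply ln_increasing; [apply K_pos; lra | unfold K; nra]. }
  assert (Hder : is_derive (area_V c G s) p (area_V_deriv c G s p))
    by (apply is_derive_area_V; lra).
  destruct (is_derive_neg_left _ _ _ Hder Hneg (Rmin (p - sqrt (c * G)) (p - c)))
    as (y & Hy & Hgt).
  { apply Rmin_glb_lt; nra. }
  pose proof (Rmin_l (p - sqrt (c * G)) (p - c)). pose proof (Rmin_r (p - sqrt (c * G)) (p - c)).
  assert (area c G s y <= area c G s p) by (apply Hmax; lra).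
  rewrite !area_eq_area_V in * by (try lra; nra). lra.
Qed.

Lemma area_VI_deriv_eq_0 c G s p : 0 < c -> c < G -> 0 < s < 1 -> c < p < G ->
  p ^ 2 < c * G -> plin c G s < p -> area_max c G s p -> area_VI_deriv c G s p = 0.
Proof.
  intros Hc HcG Hs Hp Hsq Hl Hmax.
  destruct (sqrt_cG c G Hc HcG) as [Hr Hcr].
  destruct (exists_pos_le (sqrt (c * G) - p) (p - plin c G s) (p - c))
    as (h & Hh & Hh1 & Hh2 & Hh3); try nra.
  destruct (VI_roots c G s p Hc ltac:(lra) Hs ltac:(lra) Hl) as (HD & Hr1 & _).
  destruct (VI_ordering c G s p Hc HcG Hs ltac:(lra) ltac:(lra) Hsq ltac:(lra) Hr1)
    as (_ & Hwc & Hr2 & _).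
  apply (is_derive_local_max (area_VI c G s) p (area_VI_deriv c G s p) h); auto.
  - apply is_derive_area_VI; lra.
  - intros y Hy.
    destruct (VI_roots c G s y Hc ltac:(lra) Hs ltac:(lra) ltac:(lra)) as (_ & Hy1 & _).
    rewrite <- !area_eq_area_VI by (try lra; nra). apply Hmax; lra.
Qed.

Lemma VI_boundary_not_max c G s p : 0 < c -> c < G -> 0 < s < 1 -> c < p < G ->
  p ^ 2 < c * G -> p = plin c G s -> G * (1 - s) < c * s -> ~ area_max c G s p.
Proof.
  intros Hc HcG Hs Hp Hsq Hl Hgs Hmax.
  destruct (sqrt_cG c G Hc HcG) as [Hr Hcr].
  destruct (VI_boundary_roots c G s p Hc ltac:(lra) Hs Hl Hgs) as (HD & Hr1 & Hwc).
  destruct (VI_ordering c G s p Hc HcG Hs ltac:(lra) ltac:(lra) Hsq ltac:(lra) Hr1)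
    as (_ & Hwc0 & _ & Hr2).
  assert (Hpos : 0 < area_VI_deriv c G s p).
  { unfold area_VI_deriv. rewrite <- Hwc, Rminus_diag.
    assert (ln (wc G s p) < 0) by (rewrite <- ln_1; apply ln_increasing; lra).
    assert (Ls s (wc G s p) < s) by (unfold Ls; nra).
    replace (- 0 / (G * s)) with 0 by (field; lra). rewrite Rplus_0_l.
    apply Rmult_lt_0_compat; [positivity | lra]. }
  assert (Hder : is_derive (area_VI c G s) p (area_VI_deriv c G s p))
    by (apply is_derive_area_VI; lra).
  destruct (is_derive_pos_right _ _ _ Hder Hpos (Rmin (sqrt (c * G) - p) (G - p)))
    as (y & Hy & Hgt).
  { apply Rmin_glb_lt; nra. }
  pose proof (Rmin_l (sqrt (c * G) - p) (G - p)). pose proof (Rmin_r (sqrt (c * G) - p) (G - p)).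
  destruct (VI_roots c G s y Hc ltac:(lra) Hs ltac:(lra) ltac:(lra)) as (_ & Hy1 & _).
  assert (area c G s y <= area c G s p) by (apply Hmax; lra).
  rewrite !area_eq_area_VI in * by (try lra; nra). lra.
Qed.

Lemma max_below_sqrt_below_plin c G s p : 0 < c -> c < G -> 0 < s < 1 -> c < p < G ->
  p ^ 2 < c * G -> p < plin c G s -> area_max c G s p -> near_IV c G s p.
Proof.
  intros Hc HcG Hs Hp Hsq Hl Hmax.
  destruct (sqrt_cG c G Hc HcG) as [Hr [Hcr HrG]].
  assert (Hpr : p < sqrt (c * G)) by (pose proof (sqrt_pos (c * G)); nra).
  destruct (Rlt_le_dec (disc c G s p) 0) as [HD | HD].
  - assert (HQc : 4 * c * G * s * (1 - s) <= c * G).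
    { assert (0 <= c * G * (2 * s - 1) ^ 2) by (apply Rmult_le_pos; [nra | apply pow2_ge_0]). nra. }
    unfold disc in HD.
    destruct (exists_between_sq p (4 * c * G * s * (1 - s)) G) as (p' & Hp' & Hp'2); try nra.
    exfalso. revert Hmax. apply (not_area_max_of_lt c G s p s p'); try lra.
    apply area_lt_of_ds_regime; try lra.
    intros w _ _. apply crossing_nonneg_of_disc_neg; try lra. unfold disc. lra.
  - destruct (Rle_lt_dec s (1 / 2)) as [Hs2 | Hs2].
    + exfalso. revert Hmax. apply (not_area_max_of_lt c G s p s (sqrt (c * G))); try lra.
      apply area_lt_of_ds_regime; try lra.
      intros w Hw _. apply crossing_nonneg_of_half; lra.
    + destruct (Rle_lt_dec (G * (1 - s)) (c * s)) as [Hgs | Hgs].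
      * exfalso. assert (HlG : plin c G s < G) by (unfold plin; nra).
        revert Hmax. apply (not_area_max_of_lt c G s p s (plin c G s)); try lra.
        apply area_lt_of_ds_regime; try lra.
        intros w Hw Hds. apply ds_pos_iff in Hds; try lra.
        apply crossing_nonneg_above_ws; lra.
      * apply near_IV_refl. unfold disc in HD. repeat split; try lra.
        apply Rlt_div_r; lra.
Qed.

Lemma max_below_sqrt c G s p : 0 < c -> c < G -> 0 < s < 1 -> c < p < G ->
  p ^ 2 < c * G -> area_max c G s p ->
  near_IV c G s p \/ (plin c G s < p /\ area_VI_deriv c G s p = 0).
Proof.
  intros Hc HcG Hs Hp Hsq Hmax.
  destruct (Rtotal_order p (plin c G s)) as [Hl | [Hl | Hl]].
  - left. apply max_below_sqrt_below_plin; auto.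
  - left. destruct (Rlt_le_dec (G * (1 - s)) (c * s)) as [Hgs | Hgs].
    + exfalso. apply (VI_boundary_not_max c G s p); auto.
    + apply near_IV_plin_edge; auto. destruct (Rle_lt_dec s (1 / 2)); auto.
      pose proof (plin_gt_of_small_s c G s p Hc HcG ltac:(lra) ltac:(lra) ltac:(lra)). lra.
  - right. split; auto. apply area_VI_deriv_eq_0; auto.
Qed.

Lemma max_at_sqrt c G s p : 0 < c -> c < G -> 0 < s < 1 -> c < p < G ->
  p ^ 2 = c * G -> area_max c G s p -> near_IV c G s p.
Proof.
  intros Hc HcG Hs Hp Hsq Hmax.
  destruct (Rtotal_order s (1 / 2)) as [Hs2 | [Hs2 | Hs2]].
  - exfalso. revert Hmax. apply (not_area_max_of_lt c G s p (1 / 2) p); try lra.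
    apply area_lt_of_ds_regime; try lra.
    intros w Hw _. apply crossing_nonneg_of_half; lra.
  - subst s. apply near_IV_sqrt_half; auto.
  - destruct (Rle_lt_dec p (plin c G s)) as [Hl | Hl].
    + apply near_IV_sqrt_edge; auto. destruct (Rlt_le_dec (c * s) (G * (1 - s))); auto.
      pose proof (plin_lt_of_large_s c G s p Hc HcG Hs ltac:(lra) ltac:(lra) ltac:(lra)). lra.
    + assert (Hs' : 0 < (G - p) / (G - c) < s).
      { split; [positivity|]. apply Rlt_div_l; unfold plin in Hl; lra. }
      assert (Hl' : plin c G ((G - p) / (G - c)) = p) by (unfold plin; field; lra).
      exfalso. revert Hmax. apply (not_area_max_of_lt c G s p ((G - p) / (G - c)) p); try lra.
      apply area_lt_of_dc_regime; try lra.
      intros w Hw Hdc. apply dc_pos_iff in Hdc; try lra.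
      apply crossing_nonpos_above_wc; lra.
Qed.

Lemma max_above_sqrt c G s p : 0 < c -> c < G -> 0 < s < 1 -> c < p < G ->
  c * G < p ^ 2 -> area_max c G s p -> p < plin c G s /\ area_V_deriv c G s p = 0.
Proof.
  intros Hc HcG Hs Hp Hsq Hmax.
  destruct (sqrt_cG c G Hc HcG) as [Hr [Hcr HrG]].
  assert (Hrp : sqrt (c * G) < p) by (pose proof (sqrt_pos (c * G)); nra).
  destruct (Rtotal_order p (plin c G s)) as [Hl | [Hl | Hl]].
  - split; auto. apply area_V_deriv_eq_0; auto.
  - exfalso. apply (V_boundary_not_max c G s p); auto.
  - exfalso. set (p' := Rmax (sqrt (c * G)) (plin c G s)).
    assert (Hp'1 : sqrt (c * G) <= p') by apply Rmax_l.
    assert (Hp'2 : plin c G s <= p') by apply Rmax_r.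
    assert (Hp'3 : p' < p) by (apply Rmax_lub_lt; lra).
    clearbody p'.
    revert Hmax. apply (not_area_max_of_lt c G s p s p'); try lra.
    apply area_lt_of_dc_regime; try lra.
    intros w Hw Hdc. apply dc_pos_iff in Hdc; try lra.
    apply crossing_nonpos_above_wc; try lra. pose proof (sqrt_pos (c * G)). nra.
Qed.

Lemma area_max_cases c G s p : 0 < c -> c < G -> 0 < s < 1 -> c < p < G -> area_max c G s p ->
  near_IV c G s p
  \/ (c * G < p ^ 2 /\ p < plin c G s /\ area_V_deriv c G s p = 0)
  \/ (p ^ 2 < c * G /\ plin c G s < p /\ area_VI_deriv c G s p = 0).
Proof.
  intros Hc HcG Hs Hp Hmax.
  destruct (Rtotal_order (p ^ 2) (c * G)) as [Hsq | [Hsq | Hsq]].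
  - destruct (max_below_sqrt c G s p) as [| []]; auto.
  - left. apply max_at_sqrt; auto.
  - right; left. split; auto. apply max_above_sqrt; auto.
Qed.

Lemma region_V_equation c G t tau p : 0 < c -> c < G -> 0 < t -> 0 < tau < t -> c < p < G ->
  c * G < p ^ 2 -> p < plin c G (tau / t) -> area_V_deriv c G (tau / t) p = 0 ->
  region_V c G t tau p /\
  A_c G t tau p (w1 c G t tau p) 1 - A_s c t tau p (w0 c G t tau p) (w1 c G t tau p)
  = 1 - 2 * w1 c G t tau p + w0 c G t tau p.
Proof.
  intros Hc HcG Ht Htau Hp Hsq Hl Hfoc.
  assert (Hs : 0 < tau / t < 1) by (split; [positivity | apply Rlt_div_l; lra]).
  assert (HD := disc_pos c G (tau / t) p Hc ltac:(lra) Hsq).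
  destruct (V_ordering c G (tau / t) p Hc HcG Hs ltac:(lra) Hsq ltac:(lra)) as (Hwc & _).
  split.
  - destruct (sqrt_cG c G Hc HcG) as [Hr _]. pose proof (sqrt_pos (c * G)).
    unfold region_V, inD, sr, disc, plin in *. repeat split; nra.
  - rewrite w1_root1, w0_scaled, Rmax_left, A_s_scaled, A_c_scaled, V_identity, Hfoc by lra.
    ring.
Qed.

Lemma region_VI_equation c G t tau p : 0 < c -> c < G -> 0 < t -> 0 < tau < t -> c < p < G ->
  p ^ 2 < c * G -> plin c G (tau / t) < p -> area_VI_deriv c G (tau / t) p = 0 ->
  region_VI c G t tau p /\
  A_s c t tau p (w2 c G t tau p) 1 - A_c G t tau p (w0 c G t tau p) (w2 c G t tau p)
  = 1 - 2 * w2 c G t tau p + w0 c G t tau p.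
Proof.
  intros Hc HcG Ht Htau Hp Hsq Hl Hfoc.
  assert (Hs : 0 < tau / t < 1) by (split; [positivity | apply Rlt_div_l; lra]).
  destruct (VI_roots c G (tau / t) p Hc ltac:(lra) Hs ltac:(lra) Hl) as (HD & Hr1 & _).
  destruct (VI_ordering c G (tau / t) p Hc HcG Hs ltac:(lra) ltac:(lra) Hsq ltac:(lra) Hr1)
    as (Hws & _).
  split.
  - destruct (sqrt_cG c G Hc HcG) as [Hr _]. pose proof (sqrt_pos (c * G)).
    unfold region_VI, inD, sr, disc, plin in *. repeat split; nra.
  - rewrite w2_root2, w0_scaled, Rmax_right, A_s_scaled, A_c_scaled, VI_identity, Hfoc by lra.
    ring.
Qed.

Theorem theorem3 (c G0 t taus ps : R) :
  0 < c -> c < G0 -> 0 < t ->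
  inD c G0 t taus ps ->
  (forall tau p, inD c G0 t tau p -> coop_area c G0 t tau p <= coop_area c G0 t taus ps) ->
  in_closure (region_IV c G0 t) taus ps
  \/ (region_V c G0 t taus ps /\
      A_c G0 t taus ps (w1 c G0 t taus ps) 1 - A_s c t taus ps (w0 c G0 t taus ps) (w1 c G0 t taus ps)
        = 1 - 2 * w1 c G0 t taus ps + w0 c G0 t taus ps)
  \/ (region_VI c G0 t taus ps /\
      A_s c t taus ps (w2 c G0 t taus ps) 1 - A_c G0 t taus ps (w0 c G0 t taus ps) (w2 c G0 t taus ps)
        = 1 - 2 * w2 c G0 t taus ps + w0 c G0 t taus ps).
Proof.
  intros Hc HcG Ht [Htau Hp] Hmax.
  assert (Hs : 0 < taus / t < 1) by (split; [positivity | apply Rlt_div_l; lra]).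
  destruct (area_max_cases c G0 (taus / t) ps Hc HcG Hs Hp (area_max_scaled c G0 t taus ps Ht Hmax))
    as [HIV | [(Hsq & Hl & Hfoc) | (Hsq & Hl & Hfoc)]].
  - left. apply in_closure_of_near_IV; auto.
  - right; left. apply region_V_equation; auto.
  - right; right. apply region_VI_equation; auto.
Qed.
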